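(* For all $\phi\in C(\mathbb{Z}_p,\mathbb{C}_p)$ and all $y\in\mathbb{Z}_p$, $S^y(\phi)=(\mathbf 1-\mathbf x)^{\star y}\star\phi$.
   Context: Fix a prime $p$. $\mathbb{C}_p$ denotes the completion of an algebraic closure of $\mathbb{Q}_p$, with absolute value $|\cdot|$ normalized by $|p|=1/p$. $C(\mathbb{Z}_p,\mathbb{C}_p)$ is the $\mathbb{C}_p$-Banach space of continuous functions $\mathbb{Z}_p\to\mathbb{C}_p$ with the sup-norm $\|\cdot\|$. For $n\in\mathbb{Z}_{\ge0}$ and $x\in\mathbb{Z}_p$, $\binom{x}{n}=x(x-1)\cdots(x-n+1)/n!$. For $\phi\in C(\mathbb{Z}_p,\mathbb{C}_p)$ let $(\nabla\phi)(x)=\phi(x+1)-\phi(x)$; every such $\phi$ has the Mahler expansion $\phi(x)=\sum_{n\ge0}(\nabla^n\phi)(0)\binom{x}{n}$. The convolution $\phi\star\psi$ of $\phi,\psi\in C(\mathbb{Z}_p,\mathbb{C}_p)$ is the continuous function with Mahler coefficients $(\nabla^n(\phi\star\psi))(0)=\sum_{k=0}^n\binom nk(\nabla^k\phi)(0)(\nabla^{n-k}\psi)(0)$. For $y\in\mathbb{Z}_p$ define $S^y(\phi)(x)=\sum_{k\ge0}(-1)^k k!\binom yk\binom xk\phi(x-k)$. Write $\mathbf 1$ for the constant function $1$ and $\mathbf x$ for $x\mapsto x$, and set $(\mathbf 1-\mathbf x)^{\star y}:=S^y(\mathbf 1)$ for $y\in\mathbb{Z}_p$. *)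

From HB Require Import structures.
From mathcomp Require Import all_boot all_order all_algebra.
From mathcomp Require Import reals.
From Stdlib Require Import ClassicalEpsilon.
Set Implicit Arguments. Unset Strict Implicit. Unset Printing Implicit Defensive.
Import Order.TTheory GRing.Theory Num.Theory.
Local Open Scope ring_scope.

(* The field C_p is modelled abstractly: a type K together with a real-valued
   absolute value abs : K -> R satisfying the properties that characterize
   C_p up to isometric isomorphism. *)

Section Defs.
Variables (R : realType) (K : closedFieldType) (abs : K -> R).

Definition cvgK (u : nat -> K) (l : K) : Prop :=
  forall eps : R, 0 < eps -> exists N : nat, forall n, (N <= n)%N -> abs (u n - l) < eps.

Definition cauchyK (u : nat -> K) : Prop :=
  forall eps : R, 0 < eps -> exists N : nat, forall m n, (N <= m)%N -> (N <= n)%N ->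
    abs (u m - u n) < eps.

(* the limit of a sequence (an arbitrary value if it does not converge) *)
Definition limK (u : nat -> K) : K := epsilon (inhabits 0) (fun l => cvgK u l).

Definition seriesK (a : nat -> K) : K := limK (fun n => \sum_(k < n) a k).

Record is_Cp (p : nat) : Prop := {
  Cp_prime : prime p;
  Cp_char0 : [pchar K] =i pred0;
  Cp_abs_ge0 : forall x, 0 <= abs x;
  Cp_abs_eq0 : forall x, abs x = 0 <-> x = 0;
  Cp_absM : forall x y, abs (x * y) = abs x * abs y;
  Cp_abs_ultra : forall x y, abs (x + y) <= Num.max (abs x) (abs y);
  Cp_abs_p : abs (p%:R) = (p%:R)^-1;
  Cp_complete : forall u, cauchyK u -> exists l, cvgK u l;
  Cp_alg_dense : forall x (eps : R), 0 < eps ->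
     exists (q : {poly rat}) (a : K), q != 0 /\ root (map_poly ratr q) a /\ abs (x - a) < eps
}.

Definition isZp (x : K) : Prop :=
  forall eps : R, 0 < eps -> exists n : int, abs (x - n%:~R) < eps.

Definition contZp (phi : K -> K) : Prop :=
  forall x, isZp x -> forall eps : R, 0 < eps -> exists2 delta : R, 0 < delta &
    forall z, isZp z -> abs (z - x) < delta -> abs (phi z - phi x) < eps.

Definition binomK (x : K) (n : nat) : K :=
  (\prod_(i < n) (x - i%:R)) / (n`!)%:R.

Definition nablaK (phi : K -> K) : K -> K := fun x => phi (x + 1) - phi x.

Definition mahler (phi : K -> K) (n : nat) : K := iter n nablaK phi 0.

Definition mahler_fun (c : nat -> K) : K -> K :=
  fun x => seriesK (fun n => c n * binomK x n).

Definition conv_coef (phi psi : K -> K) (n : nat) : K :=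
  \sum_(k < n.+1) ('C(n, k))%:R * mahler phi k * mahler psi (n - k).

Definition convK (phi psi : K -> K) : K -> K := mahler_fun (conv_coef phi psi).

Definition Sop (y : K) (phi : K -> K) : K -> K := fun x =>
  seriesK (fun k => (-1) ^+ k * (k`!)%:R * binomK y k * binomK x k * phi (x - k%:R)).

Definition one_minus_x_pow (y : K) : K -> K := Sop y (fun _ => 1).

End Defs.

(* Both sides are continuous on Z_p and they agree on the dense set of natural numbers.

   At x = N both series are finite sums, since binom(N, k) = 0 for k > N. The Mahler
   coefficients of (1 - x)^{*y} = S^y(1) are (-1)^k k! binom(y, k); expanding phi(N - k) by
   Newton's forward-difference formula, the identity at N reduces to
   binom(k + m, k) binom(N, k + m) = binom(N, k) binom(N - k, m).

   Both series converge uniformly on Z_p, so both sides are continuous: the terms of S^y(phi)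
   are bounded by |k!| sup |phi|, and |k!| -> 0; the convolution coefficients tend to 0 because
   the Mahler coefficients of a continuous g do. For the latter, if p^-M is a modulus of
   uniform continuity of g for eps, then sup |nabla^(p^M) g| <= max(eps, sup |g| / p), since
   p divides binom(p^M, j) for 0 < j < p^M; iterating, nabla^n g (0) -> 0. *)

From mathcomp Require Import all_boot all_order all_algebra.
From mathcomp Require Import reals.
From mathcomp Require Import ring zify.
From Stdlib Require Import Classical ClassicalEpsilon FunctionalExtensionality.
Set Implicit Arguments. Unset Strict Implicit. Unset Printing Implicit Defensive.
Import Order.TTheory GRing.Theory Num.Theory.
Local Open Scope ring_scope.

Section Cp.
Variables (R : realType) (K : closedFieldType) (abs : K -> R) (p : nat).
Hypothesis HCp : is_Cp abs p.

Lemma abs_ge0 x : 0 <= abs x. Proof. exact: Cp_abs_ge0 HCp x. Qed.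
Lemma abs_eq0 x : abs x = 0 <-> x = 0. Proof. exact: Cp_abs_eq0 HCp x. Qed.
Lemma absM x y : abs (x * y) = abs x * abs y. Proof. exact: Cp_absM HCp x y. Qed.
Lemma abs0 : abs 0 = 0. Proof. exact/abs_eq0. Qed.

Lemma absD_le x y e : abs x <= e -> abs y <= e -> abs (x + y) <= e.
Proof. by move=> hx hy; apply: le_trans (Cp_abs_ultra HCp x y) _; rewrite ge_max hx. Qed.

Lemma absD_lt x y e : abs x < e -> abs y < e -> abs (x + y) < e.
Proof. by move=> hx hy; apply: le_lt_trans (Cp_abs_ultra HCp x y) _; rewrite gt_max hx. Qed.

Lemma abs1 : abs 1 = 1.
Proof.
have h1 : abs 1 != 0 by apply/eqP => /abs_eq0/eqP; rewrite oner_eq0.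
by apply: (mulfI h1); rewrite -absM !mulr1.
Qed.

Lemma absN1 : abs (-1) = 1.
Proof.
have h1 : abs (-1) ^+ 2 = 1 by rewrite expr2 -absM mulrNN mulr1 abs1.
by apply/eqP; rewrite -(eqrXn2 (n := 2)) ?expr1n ?h1 ?abs_ge0.
Qed.

Lemma absN x : abs (- x) = abs x. Proof. by rewrite -mulN1r absM absN1 mul1r. Qed.
Lemma distC x y : abs (x - y) = abs (y - x). Proof. by rewrite -absN opprB. Qed.

Lemma absB_le x y e : abs x <= e -> abs y <= e -> abs (x - y) <= e.
Proof. by move=> hx hy; apply: absD_le; rewrite ?absN. Qed.

Lemma absB_lt x y e : abs x < e -> abs y < e -> abs (x - y) < e.
Proof. by move=> hx hy; apply: absD_lt; rewrite ?absN. Qed.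

Lemma dist_trans_le x y z e : abs (x - y) <= e -> abs (y - z) <= e -> abs (x - z) <= e.
Proof. by move=> h1 h2; rewrite -(subrKA y); apply: absD_le. Qed.

Lemma dist_trans_lt x y z e : abs (x - y) < e -> abs (y - z) < e -> abs (x - z) < e.
Proof. by move=> h1 h2; rewrite -(subrKA y); apply: absD_lt. Qed.

Lemma absX x n : abs (x ^+ n) = abs x ^+ n.
Proof. by elim: n => [|n IH]; rewrite ?abs1 // !exprS absM IH. Qed.

Lemma abs_sign n : abs ((-1) ^+ n : K) = 1. Proof. by rewrite absX absN1 expr1n. Qed.

Lemma absV x : abs (x^-1) = (abs x)^-1.
Proof.
have [->|hx] := eqVneq x 0; first by rewrite invr0 abs0 invr0.
have hx0 : abs x != 0 by apply: contra_neq hx => /abs_eq0.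
by apply: (mulfI hx0); rewrite -absM !mulfV ?abs1.
Qed.

Lemma abs_sum_le (I : Type) (r : seq I) (P : pred I) (F : I -> K) (e : R) :
  0 <= e -> (forall i, P i -> abs (F i) <= e) -> abs (\sum_(i <- r | P i) F i) <= e.
Proof.
move=> e0 hF; apply: (big_ind (fun x => abs x <= e)) => //; first by rewrite abs0.
by move=> x y; apply: absD_le.
Qed.

Lemma abs_natr_le1 n : abs (n%:R : K) <= 1.
Proof. by elim: n => [|n IH]; rewrite ?abs0 // mulrS; apply: absD_le; rewrite ?abs1. Qed.

Lemma abs_intr_le1 (z : int) : abs (z%:~R : K) <= 1.
Proof. by case: z => n; rewrite ?NegzE ?mulrNz ?absN -pmulrn abs_natr_le1. Qed.

Lemma abs_le_eps_eq0 x : (forall e : R, 0 < e -> abs x <= e) -> x = 0.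
Proof.
move=> h; apply/abs_eq0/eqP; rewrite eq_le abs_ge0 andbT.
by apply/ler_addgt0Pr => e e0; rewrite add0r h.
Qed.

Lemma cvgK_dist_le u l c e : cvgK abs u l ->
  (exists N, forall n, (N <= n)%N -> abs (u n - c) <= e) -> abs (l - c) <= e.
Proof.
move=> hu [N hN]; rewrite leNgt; apply/negP => hlt.
have [N1 hN1] := hu _ (le_lt_trans (le_trans (abs_ge0 _) (hN N (leqnn N))) hlt).
have hn := hN1 _ (leq_maxr N N1); rewrite distC in hn.
by have := dist_trans_lt hn (le_lt_trans (hN _ (leq_maxl N N1)) hlt); rewrite ltxx.
Qed.

Lemma cvgK_lim u l : cvgK abs u l -> limK abs u = l.
Proof.
move=> hu; have hlim : cvgK abs u (limK abs u) by apply: epsilon_spec; exists l.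
apply/eqP; rewrite -subr_eq0; apply/eqP/abs_le_eps_eq0 => e e0.
have [N hN] := hu e e0; apply: cvgK_dist_le hlim _; exists N => n hn; exact/ltW/hN.
Qed.

Definition tends0 (a : nat -> K) :=
  forall e : R, 0 < e -> exists N, forall n, (N <= n)%N -> abs (a n) <= e.

Lemma abs_psum_tail_le (a : nat -> K) N n (e : R) : (N <= n)%N -> 0 <= e ->
  (forall k, (N <= k)%N -> abs (a k) <= e) ->
  abs (\sum_(k < n) a k - \sum_(k < N) a k) <= e.
Proof.
move=> hNn e0 ha; rewrite -!(big_mkord xpredT) (big_cat_nat (leq0n N) hNn) /=.
rewrite addrAC subrr add0r big_seq; apply: abs_sum_le => // k.
by rewrite mem_index_iota => /andP[hk _]; apply: ha.
Qed.

Lemma cvgK_series a : tends0 a -> cvgK abs (fun n => \sum_(k < n) a k) (seriesK abs a).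
Proof.
move=> ha; suff [l hl] : exists l, cvgK abs (fun n => \sum_(k < n) a k) l.
  by rewrite /seriesK (cvgK_lim hl).
apply: (Cp_complete HCp) => e e0.
have e2 : 0 < e / 2 by rewrite divr_gt0.
have [N hN] := ha _ e2; exists N => m n hm hn.
apply: (@le_lt_trans _ _ (e / 2)); last by rewrite ltr_pdivrMr // ltr_pMr // ltr1n.
rewrite -(subrKA (\sum_(k < N) a k)).
by apply: absD_le; [|rewrite distC]; apply: abs_psum_tail_le => //; apply: ltW.
Qed.

Lemma seriesK_tail_le a N (e : R) : tends0 a -> 0 <= e ->
  (forall k, (N <= k)%N -> abs (a k) <= e) ->
  abs (seriesK abs a - \sum_(k < N) a k) <= e.
Proof.
move=> ha e0 hN; apply: cvgK_dist_le (cvgK_series ha) _.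
by exists N => n hn; apply: abs_psum_tail_le.
Qed.

Lemma seriesK_finite a L : (forall k, (L <= k)%N -> a k = 0) ->
  seriesK abs a = \sum_(k < L) a k.
Proof.
move=> ha; apply: cvgK_lim => e e0; exists L => n hn.
by apply: le_lt_trans e0; apply: abs_psum_tail_le => // k hk; rewrite ha ?abs0.
Qed.

(** * The p-adic integers *)

Lemma p_prime : prime p. Proof. exact: Cp_prime HCp. Qed.
Lemma p_gt0 : (0 < p)%N. Proof. exact: prime_gt0 p_prime. Qed.
Lemma pR_gt1 : 1 < (p%:R : R). Proof. by rewrite ltr1n prime_gt1 ?p_prime. Qed.
Lemma pR_gt0 : 0 < (p%:R : R). Proof. exact: lt_trans ltr01 pR_gt1. Qed.

Lemma natrK_eq0 n : ((n%:R : K) == 0) = (n == 0)%N.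
Proof. by have /pcharf0P -> := Cp_char0 HCp. Qed.

Lemma fact_neq0 k : ((k`!)%:R : K) != 0. Proof. by rewrite natrK_eq0 -lt0n fact_gt0. Qed.

Lemma abs_fact_gt0 n : 0 < abs ((n`!)%:R : K).
Proof. by rewrite lt0r abs_ge0 andbT; apply: contra_neq (fact_neq0 n) => /abs_eq0. Qed.

Lemma pinv_lt1 : (p%:R : R)^-1 < 1. Proof. by rewrite invf_lt1 ?pR_gt0 ?pR_gt1. Qed.
Lemma pinv_gt0 : 0 < (p%:R : R)^-1. Proof. by rewrite invr_gt0 pR_gt0. Qed.

Definition pinvX (M : nat) : R := (p%:R)^-1 ^+ M.

Lemma pinvX_gt0 M : 0 < pinvX M. Proof. exact: exprn_gt0 pinv_gt0. Qed.
Lemma pinvX0 : pinvX 0 = 1. Proof. exact: expr0. Qed.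
Lemma pinvXS M : pinvX M.+1 = pinvX M * (p%:R)^-1. Proof. exact: exprSr. Qed.

Lemma pinvX_lt M N : (M < N)%N -> pinvX N < pinvX M.
Proof. by rewrite /pinvX ltr_iXn2l ?pinv_gt0 ?pinv_lt1. Qed.

Lemma pinvX_le M N : (M <= N)%N -> pinvX N <= pinvX M.
Proof. by rewrite /pinvX ler_iXn2l ?pinv_gt0 ?pinv_lt1. Qed.

Lemma abs_p : abs (p%:R) = (p%:R)^-1. Proof. exact: Cp_abs_p HCp. Qed.
Lemma abs_pX M : abs ((p ^ M)%:R : K) = pinvX M. Proof. by rewrite natrX absX abs_p. Qed.

Lemma abs_pX_mul_le M n : abs ((p ^ M)%:R * n%:R : K) <= pinvX M.
Proof. by rewrite absM abs_pX ler_piMr ?(ltW (pinvX_gt0 M)) ?abs_natr_le1. Qed.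

Lemma pinvX_small (e : R) : 0 < e -> exists M, pinvX M < e.
Proof.
move=> e0; pose n := Num.Def.archi_bound e^-1.
have h1 : e^-1 < n%:R by apply: archi_boundP; rewrite invr_ge0 ltW.
have h2 : e^-1 < (p ^ n)%:R.
  by apply: lt_trans h1 _; rewrite ltr_nat ltn_expl ?prime_gt1 ?p_prime.
exists n; rewrite /pinvX exprVn -natrX -[e]invrK ltf_pV2 // posrE ?invr_gt0 //.
by rewrite ltr0n expn_gt0 p_gt0.
Qed.

Lemma abs_natr_coprime u : coprime p u -> abs (u%:R : K) = 1.
Proof.
move=> hc; have [a _ ha] := Bezoutl u p_gt0; rewrite (eqP hc) in ha.
have e1 : (1 : K) = p%:R * ((1 + a * u) %/ p)%:R - a%:R * u%:R.
  by rewrite -natrM mulnC divnK // natrD natrM addrK.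
apply/eqP; rewrite eq_le abs_natr_le1 leNgt; apply/negP => hlt.
have hp : abs (p%:R * ((1 + a * u) %/ p)%:R : K) < 1.
  have := abs_pX_mul_le 1 ((1 + a * u) %/ p)%N.
  by rewrite expn1 => /le_lt_trans; apply; rewrite -pinvX0 pinvX_lt.
have hau : abs (a%:R * u%:R : K) < 1.
  by rewrite absM; apply: le_lt_trans hlt; rewrite ler_piMl ?abs_ge0 ?abs_natr_le1.
by have := absB_lt hp hau; rewrite -e1 abs1 ltxx.
Qed.

Lemma abs_natr_le_dvd m M : abs (m%:R : K) <= pinvX M -> (p ^ M %| m)%N.
Proof.
have [->|hm] := posnP m; first by rewrite dvdn0.
have [u hu hmu] := pfactor_coprime p_prime hm.
rewrite {1}hmu natrM absM abs_natr_coprime // mul1r abs_pX => hle.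
rewrite hmu dvdn_mull // dvdn_exp2l // leqNgt; apply/negP => /pinvX_lt.
by rewrite ltNge hle.
Qed.

Lemma isZp_nat (n : nat) : isZp abs n%:R.
Proof. by move=> e e0; exists n; rewrite subrr abs0. Qed.

Lemma isZpD x y : isZp abs x -> isZp abs y -> isZp abs (x + y).
Proof.
move=> hx hy e e0; have [n hn] := hx e e0; have [m hm] := hy e e0.
exists (n + m); have -> : x + y - (n + m)%:~R = (x - n%:~R) + (y - m%:~R) by rewrite intrD; ring.
exact: absD_lt.
Qed.

Lemma isZpN x : isZp abs x -> isZp abs (- x).
Proof. by move=> hx e e0; have [n hn] := hx e e0; exists (- n); rewrite mulrNz -opprD absN. Qed.

Lemma isZpB x y : isZp abs x -> isZp abs y -> isZp abs (x - y).
Proof. by move=> hx hy; apply/isZpD/isZpN. Qed.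

Lemma isZpS x : isZp abs x -> isZp abs (x + 1).
Proof. by move=> hx; have := isZpD hx (isZp_nat 1); rewrite mulr1n. Qed.

Lemma isZp_le1 x : isZp abs x -> abs x <= 1.
Proof.
move=> hx; have [n /ltW hn] := hx 1 ltr01.
by rewrite -(subrK n%:~R x); apply: absD_le; rewrite ?abs_intr_le1.
Qed.

(* A negative integer -m is p-adically close to the natural number p^M m - m. *)
Lemma isZp_approx_nat x (e : R) : isZp abs x -> 0 < e -> exists N : nat, abs (x - N%:R) < e.
Proof.
move=> hx e0; have [M hM] := pinvX_small e0; have [[m|m] hm] := hx e e0; first by exists m.
have hle : (m.+1 <= p ^ M * m.+1)%N by rewrite leq_pmull // expn_gt0 p_gt0.
exists (p ^ M * m.+1 - m.+1)%N; rewrite natrB // natrM.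
have -> : x - ((p ^ M)%:R * m.+1%:R - m.+1%:R) = (x - (Negz m)%:~R) - (p ^ M)%:R * m.+1%:R.
  by rewrite NegzE mulrNz; ring.
by apply: absB_lt => //; apply: le_lt_trans hM; apply: (abs_pX_mul_le M m.+1).
Qed.

Lemma isZp_refine_ball z j M : isZp abs z -> abs (z - j%:R) <= pinvX M ->
  exists2 i, (i < p)%N & abs (z - (j + i * p ^ M)%:R) <= pinvX M.+1.
Proof.
move=> hz hzj; have [N0 hN0] := isZp_approx_nat hz (pinvX_gt0 M.+1).
pose N := (N0 + p ^ M.+1 * j)%N.
have hN : abs (z - N%:R) <= pinvX M.+1.
  rewrite /N natrD natrM opprD addrA.
  by apply: absB_le; [exact: ltW | exact: (abs_pX_mul_le _ j)].
have hjN : (j <= N)%N by rewrite /N (leq_trans _ (leq_addl _ _)) // leq_pmull // expn_gt0 p_gt0.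
have hd : abs ((N - j)%:R : K) <= pinvX M.
  rewrite natrB //; have -> : N%:R - j%:R = (z - j%:R) - (z - N%:R) :> K by ring.
  by apply: absB_le => //; apply: le_trans hN _; apply: pinvX_le.
have [t ht] := dvdnP (abs_natr_le_dvd hd).
exists (t %% p)%N; first by rewrite ltn_mod p_gt0.
have -> : z - (j + t %% p * p ^ M)%:R = (z - N%:R) + (p ^ M.+1)%:R * (t %/ p)%:R.
  have eN : (N%:R : K) = j%:R + t%:R * (p ^ M)%:R by rewrite -natrM -ht -natrD subnKC.
  have et : (t%:R : K) = (t %/ p)%:R * p%:R + (t %% p)%:R by rewrite -natrM -natrD -divn_eq.
  by rewrite natrD natrM eN et expnS natrM; ring.
by apply: absD_le => //; apply: (abs_pX_mul_le _ (t %/ p)%N).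
Qed.

Definition ffactK (k : nat) (z : K) : K := \prod_(i < k) (z - i%:R).

Lemma ffactK_le1 k z : abs z <= 1 -> abs (ffactK k z) <= 1.
Proof.
move=> hz; apply: (big_ind (fun x => abs x <= 1)); first by rewrite abs1.
  by move=> a b ha hb; rewrite absM mulr_ile1 ?abs_ge0.
by move=> i _; apply: absB_le; rewrite ?abs_natr_le1.
Qed.

Lemma ffactK_dist_le k z w : abs z <= 1 -> abs w <= 1 ->
  abs (ffactK k z - ffactK k w) <= abs (z - w).
Proof.
move=> hz hw; elim: k => [|k IH]; first by rewrite /ffactK !big_ord0 subrr abs0 abs_ge0.
rewrite /ffactK !big_ord_recr /= -!/(ffactK k _).
have -> : ffactK k z * (z - k%:R) - ffactK k w * (w - k%:R) =
  (ffactK k z - ffactK k w) * (z - k%:R) + ffactK k w * (z - w) by ring.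
apply: absD_le; rewrite absM.
  by apply: le_trans IH; rewrite ler_piMr ?abs_ge0 // absB_le ?abs_natr_le1.
by rewrite ler_piMl ?abs_ge0 ?ffactK_le1.
Qed.

Lemma ffactK_nat k N : ffactK k N%:R = (N ^_ k)%:R.
Proof.
elim: k => [|k IH]; first by rewrite /ffactK big_ord0 ffactn0.
rewrite /ffactK big_ord_recr /= -/(ffactK k _) IH ffactnSr natrM.
by have [hk|hk] := leqP k N; [rewrite natrB | rewrite ffact_small // !mul0r].
Qed.

Lemma binomK_nat N k : binomK (N%:R : K) k = ('C(N, k))%:R.
Proof. by rewrite /binomK -/(ffactK k _) ffactK_nat -bin_ffact natrM mulfK ?fact_neq0. Qed.

Lemma binomKn0 (z : K) : binomK z 0 = 1.
Proof. by rewrite /binomK big_ord0 divr1. Qed.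

Lemma binomK0n k : binomK (0 : K) k = (k == 0)%:R.
Proof. by rewrite -(mulr0n 1) binomK_nat bin0n. Qed.

Lemma binomKSS (z : K) k : binomK (z + 1) k.+1 = binomK z k.+1 + binomK z k.
Proof.
have h1 : ffactK k.+1 (z + 1) = (z + 1) * ffactK k z.
  rewrite /ffactK big_ord_recl /= subr0; congr (_ * _).
  by apply: eq_bigr => i _; rewrite /bump /= add1n mulrSr; ring.
have h2 : ffactK k.+1 z = ffactK k z * (z - k%:R) by rewrite /ffactK big_ord_recr.
rewrite /binomK -!/(ffactK _ _) h1 h2 factS natrM.
have hk : (k%:R + 1 : K) != 0 by rewrite natr1 natrK_eq0.
by field; rewrite fact_neq0 addrC hk.
Qed.

(* Approximating z by a natural number N, ffactK k N = k! 'C(N, k) is divisible by k!. *)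
Lemma abs_ffactK_le_fact k z : isZp abs z -> abs (ffactK k z) <= abs ((k`!)%:R : K).
Proof.
move=> hz; have [N hN] := isZp_approx_nat hz (abs_fact_gt0 k).
rewrite -(subrK (ffactK k N%:R) (ffactK k z)); apply: absD_le.
  apply: (le_trans _ (ltW hN)); apply: ffactK_dist_le; [exact: isZp_le1 | exact: abs_natr_le1].
by rewrite ffactK_nat -bin_ffact natrM absM ler_piMl ?abs_ge0 ?abs_natr_le1.
Qed.

Lemma binomK_le1 k z : isZp abs z -> abs (binomK z k) <= 1.
Proof.
move=> hz; rewrite /binomK -/(ffactK k z) absM absV ler_pdivrMr ?abs_fact_gt0 // mul1r.
exact: abs_ffactK_le_fact.
Qed.

Lemma abs_fact_le k j : (k <= j)%N -> abs ((j`!)%:R : K) <= abs ((k`!)%:R : K).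
Proof.
move=> hkj; rewrite -(subnK hkj); elim: (j - k)%N => [|n IH] //.
by rewrite addSn factS natrM absM; apply: le_trans IH; rewrite ler_piMl ?abs_ge0 ?abs_natr_le1.
Qed.

Lemma abs_fact_mulp_le m : abs (((m * p)`!)%:R : K) <= pinvX m.
Proof.
elim: m => [|m IH]; first by rewrite mul0n pinvX0 abs1.
have hpos : (0 < m.+1 * p)%N by rewrite muln_gt0 p_gt0.
rewrite -(prednK hpos) factS natrM absM (prednK hpos) pinvXS mulrC.
apply: ler_pM; rewrite ?abs_ge0 //.
  by apply: le_trans IH; apply: abs_fact_le; rewrite -ltnS (prednK hpos) mulSn; lia.
by rewrite natrM absM abs_p ler_piMl ?abs_natr_le1 ?(ltW pinv_gt0).
Qed.

Lemma abs_fact_small (e : R) : 0 < e ->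
  exists N, forall k, (N <= k)%N -> abs ((k`!)%:R : K) <= e.
Proof.
move=> e0; have [m hm] := pinvX_small e0; exists (m * p)%N => k hk.
by apply: le_trans (abs_fact_le hk) _; apply: le_trans (abs_fact_mulp_le m) (ltW hm).
Qed.

(** * Uniform continuity on Z_p *)

Lemma exists_common_bound (Q : nat -> nat -> Prop) n :
  (forall i M M', Q i M -> (M <= M')%N -> Q i M') ->
  (forall i, (i < n)%N -> exists M, Q i M) -> exists M, forall i, (i < n)%N -> Q i M.
Proof.
move=> hmono; elim: n => [|n IH] h; first by exists 0%N.
have [M1 h1] := IH (fun i hi => h i (ltnW hi)); have [M2 h2] := h n (ltnSn n).
exists (maxn M1 M2) => i; rewrite ltnS leq_eqVlt => /predU1P[->|hi].
  by apply: hmono h2 _; exact: leq_maxr.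
by apply: hmono (h1 i hi) _; exact: leq_maxl.
Qed.

(* Compactness of Z_p in the form of König's lemma on the tree of residue classes. *)
Lemma nested_balls (Q : nat -> nat -> Prop) : Q 0%N 0%N ->
  (forall M j, Q M j -> exists2 i, (i < p)%N & Q M.+1 (j + i * p ^ M)%N) ->
  exists2 x, isZp abs x & forall M, exists2 j, Q M j & abs (x - j%:R) <= pinvX M.
Proof.
move=> hQ0 hstep.
pose child M j i := (i < p)%N /\ Q M.+1 (j + i * p ^ M)%N.
pose next M j := (j + epsilon (inhabits 0%N) (child M j) * p ^ M)%N.
have hnext M j : Q M j -> Q M.+1 (next M j) /\ abs ((next M j)%:R - j%:R : K) <= pinvX M.
  move=> hj; have [i hi hQ] := hstep M j hj.
  have [_ hQ'] := epsilon_spec (inhabits 0%N) (child M j) (ex_intro _ i (conj hi hQ)).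
  split => //; rewrite natrD addrAC subrr add0r natrM mulrC; exact: (abs_pX_mul_le M _).
pose s := fix s (M : nat) : nat := if M is M'.+1 then next M' (s M') else 0%N.
have hs M : Q M (s M) by elim: M => //= M /hnext[].
have hcs n m : (n <= m)%N -> abs ((s m)%:R - (s n)%:R : K) <= pinvX n.
  elim: m => [|m IH]; first by rewrite leqn0 => /eqP ->; rewrite subrr abs0 ltW ?pinvX_gt0.
  rewrite leq_eqVlt => /predU1P[->|]; first by rewrite subrr abs0 ltW ?pinvX_gt0.
  rewrite ltnS => hnm; apply: dist_trans_le (IH hnm).
  by apply: le_trans (pinvX_le hnm); have [] := hnext m _ (hs m).
have [x hx] : exists x, cvgK abs (fun M => (s M)%:R) x.
  apply: (Cp_complete HCp) => e e0; have [M hM] := pinvX_small e0.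
  exists M => m n hm hn; apply: le_lt_trans hM.
  by rewrite -(subrKA (s M)%:R); apply: absD_le; [|rewrite distC]; exact: hcs.
exists x => [e e0|M].
  by have [N hN] := hx e e0; exists (s N); rewrite distC; exact: hN.
by exists (s M) => //; apply: cvgK_dist_le hx _; exists M => n; exact: hcs.
Qed.

Section UniformContinuity.
Variables (g : K -> K) (e : R).

Definition unif_on_ball M j M' := forall z w, isZp abs z -> isZp abs w ->
  abs (z - j%:R) <= pinvX M -> abs (w - j%:R) <= pinvX M ->
  abs (z - w) <= pinvX M' -> abs (g z - g w) < e.

Lemma unif_on_ball_merge M j :
  (forall i, (i < p)%N -> exists M', unif_on_ball M.+1 (j + i * p ^ M) M') ->
  exists M', unif_on_ball M j M'.
Proof.
move=> hsub; have [M1 hM1] : exists M1, forall i, (i < p)%N ->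
    unif_on_ball M.+1 (j + i * p ^ M) M1.
  apply: exists_common_bound hsub => i M' M'' hM' hle z w hz hw hzc hwc hzw.
  by apply: hM' => //; apply: le_trans hzw (pinvX_le hle).
exists (maxn M1 M.+1) => z w hz hw hzj _ hzw.
have [i hi hzi] := isZp_refine_ball hz hzj.
have hwi : abs (w - (j + i * p ^ M)%:R) <= pinvX M.+1.
  rewrite -(subrKA z); apply: absD_le => //; rewrite distC.
  by apply: le_trans hzw _; apply/pinvX_le/leq_maxr.
exact: hM1 hi z w hz hw hzi hwi (le_trans hzw (pinvX_le (leq_maxl _ _))).
Qed.

End UniformContinuity.

Definition unif_modulus (g : K -> K) (e : R) M := forall z w, isZp abs z -> isZp abs w ->
  abs (z - w) <= pinvX M -> abs (g z - g w) <= e.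

Lemma contZp_unif g (e : R) : contZp abs g -> 0 < e -> exists M, unif_modulus g e M.
Proof.
move=> hg e0; suff [M hM] : exists M, unif_on_ball g e 0 0 M.
  by exists M => z w hz hw hzw; apply/ltW/hM; rewrite ?subr0 ?pinvX0 ?isZp_le1.
apply: NNPP => hbad0.
have [x hx hxM] : exists2 x, isZp abs x &
    forall M, exists2 j, ~ (exists M', unif_on_ball g e M j M') & abs (x - j%:R) <= pinvX M.
  apply: nested_balls => // M j hbad; apply: NNPP => hno; apply/hbad/unif_on_ball_merge.
  by move=> i hi; apply: NNPP => hb; apply: hno; exists i.
have [d d0 hd] := hg x hx e e0; have [M hM] := pinvX_small d0.
have [j hbad hxj] := hxM M; apply: hbad; exists M => z w hz hw hzj hwj _.
have near_x u : isZp abs u -> abs (u - j%:R) <= pinvX M -> abs (g u - g x) < e.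
  move=> hu huj; apply: hd => //; apply: le_lt_trans hM.
  by apply: dist_trans_le huj _; rewrite distC.
by apply: dist_trans_lt (near_x z hz hzj) _; rewrite distC near_x.
Qed.

Definition boundedZp (g : K -> K) (B : R) := forall z, isZp abs z -> abs (g z) <= B.

(* A modulus for the error 1 reduces the bound to the finitely many values g j, j < p^M. *)
Lemma contZp_bounded g : contZp abs g -> exists2 B, 0 < B & boundedZp g B.
Proof.
move=> hg; have [M hM] := contZp_unif hg ltr01.
pose B := Num.max 1 (\big[Num.max/0]_(j < p ^ M) abs (g j%:R)).
exists B => [|z hz]; first by rewrite lt_max ltr01.
have [N hN] := isZp_approx_nat hz (pinvX_gt0 M).
have hq : (0 < p ^ M)%N by rewrite expn_gt0 p_gt0.
pose j := Ordinal (ltn_pmod N hq).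
have hzj : abs (z - (j : nat)%:R) <= pinvX M.
  have -> : z - (N %% p ^ M)%:R = (z - N%:R) + (p ^ M)%:R * (N %/ p ^ M)%:R.
    by rewrite -natrM {2}(divn_eq N (p ^ M)) natrD; ring.
  by apply: absD_le; [exact: ltW | exact: abs_pX_mul_le].
rewrite -(subrK (g (j : nat)%:R) (g z)); apply: absD_le.
  by apply: le_trans (hM _ _ hz (isZp_nat j) hzj) _; rewrite le_max lexx.
rewrite le_max; apply/orP; right.
exact: (le_bigmax _ (fun j : 'I_(p ^ M) => abs (g (j : nat)%:R))).
Qed.

(** * Mahler coefficients *)

Definition diff_coef n j : K := (-1) ^+ (n - j) * ('C(n, j))%:R.

Lemma diff_coefSS n j : diff_coef n.+1 j.+1 = diff_coef n j - diff_coef n j.+1.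
Proof.
rewrite /diff_coef subSS binS natrD mulrDr addrC; congr (_ + _).
have [hj|hj] := ltnP j n; first by rewrite -(subnSK hj) exprS mulN1r mulNr.
by rewrite bin_small ?ltnS // mulr0n !mulr0 oppr0.
Qed.

Lemma sum_bump0 (F : nat -> K) n : \sum_(i < n) F (bump 0 i) = \sum_(i < n) F i.+1.
Proof. by apply: eq_bigr => i _; rewrite /bump leq0n add1n. Qed.

Lemma iter_nablaKE g n z :
  iter n (@nablaK K) g z = \sum_(j < n.+1) diff_coef n j * g (z + j%:R).
Proof.
elim: n z => [|n IH] z.
  by rewrite big_ord_recl big_ord0 /diff_coef /= bin0 expr0 mulr1 mul1r !addr0.
rewrite iterS /nablaK !IH [in RHS]big_ord_recl /=.
rewrite (sum_bump0 (fun k => diff_coef n.+1 k * g (z + k%:R))).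
under [in RHS]eq_bigr => j _ do rewrite diff_coefSS mulrBl.
rewrite sumrB [\sum_(j < n.+1) diff_coef n j * g (z + j%:R)]big_ord_recl /=.
rewrite (sum_bump0 (fun k => diff_coef n k * g (z + k%:R))).
under eq_bigr => i _ do rewrite -addrA [1 + _]addrC -mulrSr.
rewrite [X in _ = _ + (_ - X)]big_ord_recr /=.
have -> : diff_coef n n.+1 = 0 by rewrite /diff_coef bin_small // mulr0n mulr0.
have -> : diff_coef n.+1 0 = - diff_coef n 0 by rewrite /diff_coef !subn0 !bin0 exprS mulN1r mulNr.
rewrite mul0r addr0; set S1 := \sum_(i < n.+1) _; set S2 := \sum_(i < n) _; ring.
Qed.

Lemma prime_dvd_bin_pX M j : (0 < j)%N -> (j < p ^ M)%N -> (p %| 'C(p ^ M, j))%N.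
Proof.
move=> hj0 hjq; apply/negPn/negP => hn.
have hc : coprime (p ^ M) 'C(p ^ M, j) by rewrite coprimeXl // prime_coprime ?p_prime.
have : (p ^ M %| j * 'C(p ^ M, j))%N by rewrite -(prednK hj0) -mul_bin_diag dvdn_mulr.
by rewrite Gauss_dvdl // => /(dvdn_leq hj0); rewrite leqNgt hjq.
Qed.

Lemma abs_1_add_signX M : abs (1 + (-1) ^+ (p ^ M) : K) <= (p%:R)^-1.
Proof.
rewrite -signr_odd; case ho: (odd (p ^ M)); first by rewrite expr1 subrr abs0 ltW ?pinv_gt0.
have h2 : (2 %| p ^ M)%N by rewrite dvdn2 ho.
have : (2 %| p)%N by move: h2; rewrite Euclid_dvdX // => /andP[].
by rewrite dvdn_prime2 ?p_prime // => /eqP hp; rewrite expr0 -abs_p -hp.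
Qed.

Lemma nablaK_bounded g B : boundedZp g B -> boundedZp (@nablaK K g) B.
Proof. by move=> hg z hz; apply: absB_le; apply: hg => //; exact: isZpS. Qed.

Lemma nablaK_unif_modulus g e M : unif_modulus g e M -> unif_modulus (@nablaK K g) e M.
Proof.
move=> hg z w hz hw hzw; rewrite /nablaK.
have -> : g (z + 1) - g z - (g (w + 1) - g w) = (g (z + 1) - g (w + 1)) - (g z - g w) by ring.
have hd : z + 1 - (w + 1) = z - w by ring.
by apply: absB_le; apply: hg; rewrite ?hd //; exact: isZpS.
Qed.

Lemma iter_nablaK_bounded n g B : boundedZp g B -> boundedZp (iter n (@nablaK K) g) B.
Proof. by move=> hg; elim: n => //= n; apply: nablaK_bounded. Qed.

Lemma iter_nablaK_unif_modulus n g e M :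
  unif_modulus g e M -> unif_modulus (iter n (@nablaK K) g) e M.
Proof. by move=> hg; elim: n => //= n; apply: nablaK_unif_modulus. Qed.

(* The inner binomial coefficients 'C(p^M, j), 0 < j < p^M, are divisible by p, and the two
   outer terms combine to (g (z + p^M) - g z) + (1 + (-1)^(p^M)) g z. *)
Lemma iter_nablaK_pX_bounded g (B e : R) M : 0 <= e -> 0 <= B ->
  boundedZp g B -> unif_modulus g e M ->
  boundedZp (iter (p ^ M) (@nablaK K) g) (Num.max e (B * (p%:R)^-1)).
Proof.
move=> e0 B0 hb hu z hz; rewrite iter_nablaKE.
have hq : (0 < p ^ M)%N by rewrite expn_gt0 p_gt0.
move: (hq); rewrite -(prednK hq); set q := (p ^ M).-1 => _.
rewrite big_ord_recr big_ord_recl /=; set mid := \sum_(i < q) _.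
have hzj j : isZp abs (z + j%:R) by apply/isZpD/isZp_nat.
have hmid : abs mid <= B * (p%:R)^-1.
  apply: abs_sum_le; first by rewrite mulr_ge0 ?(ltW pinv_gt0).
  move=> i _; rewrite /diff_coef !absM abs_sign mul1r mulrC.
  apply: ler_pM; rewrite ?abs_ge0 ?hb //.
  have /dvdnP[c ->] : (p %| 'C(q.+1, bump 0 i))%N.
    rewrite /q prednK //; apply: prime_dvd_bin_pX; rewrite /bump leq0n add1n //.
    by have := ltn_ord i; rewrite /q ltn_predRL.
  by rewrite natrM absM abs_p ler_piMl ?(ltW pinv_gt0) ?abs_natr_le1.
have -> : diff_coef q.+1 0 * g (z + 0%:R) + mid + diff_coef q.+1 q.+1 * g (z + q.+1%:R) =
    (g (z + q.+1%:R) - g z) + (1 + (-1) ^+ q.+1) * g z + mid.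
  by rewrite /diff_coef subn0 subnn bin0 binn expr0 mulr1 mul1r addr0; ring.
apply: absD_le; last by rewrite le_max hmid orbT.
apply: absD_le.
  rewrite le_max; apply/orP; left; apply: hu => //.
  by rewrite addrC addKr /q prednK // abs_pX.
rewrite le_max absM mulrC ler_pM ?abs_ge0 ?hb // ?orbT //.
by rewrite /q prednK // abs_1_add_signX.
Qed.

Lemma iter_nablaK_mulpX_bounded g (B e : R) M k : 0 <= e -> 0 <= B ->
  boundedZp g B -> unif_modulus g e M ->
  boundedZp (iter (k * p ^ M) (@nablaK K) g) (Num.max e (B * pinvX k)).
Proof.
move=> e0 B0 hb hu; elim: k => [|k IH].
  by move=> z hz; rewrite mul0n pinvX0 mulr1 le_max hb ?orbT.
rewrite mulSn iterD => z hz.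
have hB' : 0 <= Num.max e (B * pinvX k) by rewrite le_max e0.
apply: le_trans (iter_nablaK_pX_bounded e0 hB' IH (iter_nablaK_unif_modulus _ hu) hz) _.
rewrite ge_max le_max lexx /= pinvXS mulrA.
have [_|_] := lerP e (B * pinvX k); first by rewrite le_max lexx orbT.
by rewrite le_max ler_piMr ?(ltW pinv_lt1).
Qed.

Lemma abs_mahler_le g B n : boundedZp g B -> abs (mahler g n) <= B.
Proof. by move=> hg; apply: iter_nablaK_bounded hg _ (isZp_nat 0). Qed.

Lemma mahler_tends0 g : contZp abs g -> tends0 (mahler g).
Proof.
move=> hg e e0; have [B B0 hB] := contZp_bounded hg.
have [M hM] := contZp_unif hg e0; have [k hk] := pinvX_small (divr_gt0 e0 B0).
exists (k * p ^ M)%N => n hn; rewrite /mahler -(subnK hn) iterD.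
have := iter_nablaK_mulpX_bounded k (ltW e0) (ltW B0) hB hM.
move=> /(iter_nablaK_bounded (n - k * p ^ M))/(_ 0 (isZp_nat 0))/le_trans; apply.
by rewrite ge_max lexx /= mulrC -ler_pdivlMr // ltW.
Qed.

Lemma mahler_nablaK (g : K -> K) m : mahler (@nablaK K g) m = mahler g m.+1.
Proof. by rewrite /mahler iterSr. Qed.

Lemma mahler_expansion_nat (g : K -> K) N :
  g N%:R = \sum_(m < N.+1) ('C(N, m))%:R * mahler g m.
Proof.
elim: N g => [|N IH] g; first by rewrite big_ord1 bin0 mul1r.
have -> : g N.+1%:R = g N%:R + nablaK g N%:R by rewrite /nablaK -mulrSr addrC subrK.
rewrite !IH; under [X in _ + X]eq_bigr => m _ do rewrite mahler_nablaK.
rewrite [in RHS]big_ord_recl /= (sum_bump0 (fun k => ('C(N.+1, k))%:R * mahler g k)).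
under [in RHS]eq_bigr => m _ do rewrite binS natrD mulrDl.
rewrite big_split /= [in LHS]big_ord_recl /= (sum_bump0 (fun k => ('C(N, k))%:R * mahler g k)).
rewrite [\sum_(i < N.+1) ('C(N, i.+1))%:R * _]big_ord_recr /= (bin_small (ltnSn N)).
by rewrite !bin0; ring.
Qed.

Definition mahler_poly (c : nat -> K) L (z : K) := \sum_(i < L) c i * binomK z i.

Lemma nablaK_mahler_poly c L : nablaK (mahler_poly c L.+1) = mahler_poly (fun i => c i.+1) L.
Proof.
apply: functional_extensionality => z; rewrite /nablaK /mahler_poly -sumrB big_ord_recl /=.
rewrite !binomKn0 subrr add0r (sum_bump0 (fun i => c i * binomK (z + 1) i - c i * binomK z i)).
by apply: eq_bigr => i _; rewrite binomKSS mulrDr addrC addKr.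
Qed.

Lemma iter_nablaK_mahler_poly m c L :
  iter m (@nablaK K) (mahler_poly c (L + m)) = mahler_poly (fun i => c (i + m)%N) L.
Proof.
elim: m c => [|m IH] c.
  by rewrite addn0; congr mahler_poly; apply: functional_extensionality => i; rewrite addn0.
rewrite iterSr addnS nablaK_mahler_poly IH; congr mahler_poly.
by apply: functional_extensionality => i; rewrite addnS.
Qed.

Lemma mahler_mahler_poly c L m : (m < L)%N -> mahler (mahler_poly c L) m = c m.
Proof.
move=> hm; rewrite /mahler -(subnK hm) addnS -addSn iter_nablaK_mahler_poly /mahler_poly.
rewrite big_ord_recl /= binomK0n mulr1 add0n big1 ?addr0 // => i _.
by rewrite binomK0n mulr0.
Qed.

Lemma iter_nablaK_eq_nat (g h : K -> K) L : (forall j, (j <= L)%N -> g j%:R = h j%:R) ->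
  forall n j, (j + n <= L)%N -> iter n (@nablaK K) g j%:R = iter n (@nablaK K) h j%:R.
Proof.
move=> hgh; elim=> [|n IH] j hj; first by apply: hgh; rewrite addn0 in hj.
rewrite !iterS /nablaK -mulrSr !IH // ?addSn -?addnS //.
by apply: leq_trans hj; rewrite leq_add2l.
Qed.

Lemma bin_mul_bin k m N : ('C(k + m, k) * 'C(N, k + m) = 'C(N, k) * 'C(N - k, m))%N.
Proof.
have [hkm|hkm] := leqP (k + m) N; last first.
  rewrite (bin_small hkm) muln0; have [hk|hk] := leqP k N; last by rewrite bin_small.
  by rewrite (@bin_small (N - k)) ?muln0 // ltn_subLR.
have hk : (k <= N)%N by apply: leq_trans hkm; apply: leq_addr.
have hm : (m <= N - k)%N by rewrite leq_subRL.
have hkmk := bin_fact (leq_addr m k); rewrite addKn in hkmk.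
have hX : (0 < k`! * m`! * (N - k - m)`!)%N by rewrite !muln_gt0 !fact_gt0.
apply/eqP; rewrite -(eqn_pmul2r hX); apply/eqP; transitivity N`!.
  by rewrite -(bin_fact hkm) -hkmk subnDA; ring.
by rewrite -(bin_fact hk) -(bin_fact hm); ring.
Qed.

Lemma sum_triangle (F : nat -> nat -> K) N :
  \sum_(n < N.+1) \sum_(k < n.+1) F k (n - k)%N = \sum_(k < N.+1) \sum_(m < (N - k).+1) F k m.
Proof.
elim: N => [|N IH]; first by rewrite !big_ord_recl !big_ord0.
rewrite big_ord_recr /= IH [in RHS]big_ord_recr /= subnn.
under [in RHS]eq_bigr => i _ do rewrite (subSn (ltn_ord i : (i <= N)%N)) big_ord_recr /=.
rewrite big_split /= -addrA; congr (_ + _).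
rewrite [in LHS]big_ord_recr /= subnn big_ord1; congr (_ + _).
by apply: eq_bigr => i _; rewrite subSn // -ltnS.
Qed.

Definition cont_at (f : K -> K) (x : K) := forall e : R, 0 < e -> exists M, forall z,
  isZp abs z -> abs (x - z) <= pinvX M -> abs (f x - f z) <= e.

Lemma eq_cont_at f g x : f =1 g -> cont_at f x -> cont_at g x.
Proof. by move=> hfg hf e e0; have [M hM] := hf e e0; exists M => z; rewrite -!hfg; apply: hM. Qed.

Lemma contZp_cont_at f x : contZp abs f -> isZp abs x -> cont_at f x.
Proof.
move=> hf hx e e0; have [d d0 hd] := hf x hx e e0; have [M hM] := pinvX_small d0.
by exists M => z hz hxz; rewrite distC ltW // hd // distC (le_lt_trans hxz).
Qed.

Lemma cont_at_shift f c x : isZp abs c -> cont_at f (x + c) -> cont_at (fun z => f (z + c)) x.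
Proof.
move=> hc hf e e0; have [M hM] := hf e e0; exists M => z hz hxz.
by apply: hM; [exact: isZpD | rewrite opprD addrACA subrr addr0].
Qed.

Lemma cont_atZ c f x : cont_at f x -> cont_at (fun z => c * f z) x.
Proof.
move=> hf e e0; have [->|hc] := eqVneq c 0.
  by exists 0%N => z _ _; rewrite !mul0r subrr abs0 ltW.
have hc0 : 0 < abs c by rewrite lt0r abs_ge0 andbT; apply: contra_neq hc => /abs_eq0.
have [M hM] := hf _ (divr_gt0 e0 hc0); exists M => z hz hxz.
by rewrite -mulrBr absM mulrC -ler_pdivlMr // hM.
Qed.

Lemma cont_atM f g (B : R) x : 0 < B -> boundedZp f 1 -> boundedZp g B -> isZp abs x ->
  cont_at f x -> cont_at g x -> cont_at (fun z => f z * g z) x.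
Proof.
move=> B0 hf hg hx cf cg e e0.
have [M1 hM1] := cf _ (divr_gt0 e0 B0); have [M2 hM2] := cg e e0.
exists (maxn M1 M2) => z hz hxz.
have hxz1 := le_trans hxz (pinvX_le (leq_maxl M1 M2)).
have hxz2 := le_trans hxz (pinvX_le (leq_maxr M1 M2)).
have -> : f x * g x - f z * g z = (f x - f z) * g x + f z * (g x - g z) by ring.
apply: absD_le; rewrite absM.
  apply: le_trans (ler_pM (abs_ge0 _) (abs_ge0 _) (hM1 z hz hxz1) (hg x hx)) _.
  by rewrite divfK ?gt_eqF.
by apply: le_trans (hM2 z hz hxz2); rewrite ler_piMl ?abs_ge0 ?hf.
Qed.

Lemma binomK_cont_at n x : isZp abs x -> cont_at (fun z => binomK z n) x.
Proof.
move=> hx; apply: (@eq_cont_at (fun z => (n`!)%:R^-1 * ffactK n z)) => [z|].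
  by rewrite /binomK mulrC.
apply: cont_atZ => e e0; have [M hM] := pinvX_small e0; exists M => z hz hxz.
by apply: le_trans (ffactK_dist_le _ _ _) (le_trans hxz (ltW hM)); apply: isZp_le1.
Qed.

Lemma seriesK_cont_at (a : K -> nat -> K) x : isZp abs x ->
  (forall e : R, 0 < e -> exists T, forall z k, isZp abs z -> (T <= k)%N -> abs (a z k) <= e) ->
  (forall k, cont_at (a^~ k) x) -> cont_at (fun z => seriesK abs (a z)) x.
Proof.
move=> hx htail hcont e e0; have [T hT] := htail e e0.
have ha z : isZp abs z -> tends0 (a z).
  by move=> hz e' e'0; have [T' hT'] := htail e' e'0; exists T' => k; apply: hT'.
have [M hM] : exists M, forall k, (k < T)%N -> forall z, isZp abs z ->
    abs (x - z) <= pinvX M -> abs (a x k - a z k) <= e.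
  apply: exists_common_bound => [k M M' hk hle z hz hxz|k _]; last exact: hcont k e e0.
  by apply: hk => //; apply: le_trans hxz (pinvX_le hle).
exists M => z hz hxz; rewrite -(subrKA (\sum_(k < T) a x k)); apply: absD_le.
  exact: seriesK_tail_le (ha x hx) (ltW e0) (hT x ^~ hx).
rewrite -(subrKA (\sum_(k < T) a z k)); apply: absD_le.
  by rewrite -sumrB; apply: abs_sum_le (ltW e0) _ => k _; apply: hM.
by rewrite distC; apply: seriesK_tail_le (ha z hz) (ltW e0) (hT z ^~ hz).
Qed.

Lemma cont_at_eq_nat f g x : isZp abs x -> cont_at f x -> cont_at g x ->
  (forall N : nat, f N%:R = g N%:R) -> f x = g x.
Proof.
move=> hx hf hg hfg; apply/eqP; rewrite -subr_eq0; apply/eqP/abs_le_eps_eq0 => e e0.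
have [M1 h1] := hf e e0; have [M2 h2] := hg e e0.
have [N hN] := isZp_approx_nat hx (pinvX_gt0 (maxn M1 M2)).
have hxN M : (M <= maxn M1 M2)%N -> abs (x - N%:R) <= pinvX M.
  by move=> hM; apply: le_trans (ltW hN) (pinvX_le hM).
rewrite -(subrKA (f N%:R)) {2}hfg; apply: absD_le.
  exact: h1 (isZp_nat N) (hxN _ (leq_maxl _ _)).
by rewrite distC; apply: h2 (isZp_nat N) (hxN _ (leq_maxr _ _)).
Qed.

(** * The operator S^y *)

Section SopConvolution.
Variables (phi : K -> K) (y : K).
Hypotheses (Hphi : contZp abs phi) (Hy : isZp abs y).

Definition sop_coef k : K := (-1) ^+ k * (k`!)%:R * binomK y k.

Lemma abs_sop_coef_le k : abs (sop_coef k) <= abs ((k`!)%:R : K).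
Proof. by rewrite /sop_coef absM absM abs_sign mul1r ler_piMr ?abs_ge0 ?binomK_le1. Qed.

Lemma one_minus_x_pow_nat L j : (j < L)%N ->
  one_minus_x_pow abs y j%:R = mahler_poly sop_coef L j%:R.
Proof.
move=> hjL; rewrite /one_minus_x_pow /Sop (seriesK_finite (L := L)).
  by apply: eq_bigr => k _; rewrite mulr1.
by move=> k hk; rewrite binomK_nat bin_small ?(leq_trans hjL) // mulr0n mulr0 mul0r.
Qed.

Lemma mahler_one_minus_x_pow k : mahler (one_minus_x_pow abs y) k = sop_coef k.
Proof.
rewrite -(mahler_mahler_poly sop_coef (ltnSn k)) /mahler.
have := @iter_nablaK_eq_nat _ (mahler_poly sop_coef k.+1) k _ k 0%N (leqnn _).
by rewrite mulr0n; apply => j hj; apply: one_minus_x_pow_nat; rewrite ltnS.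
Qed.

Lemma conv_coefE n : conv_coef (one_minus_x_pow abs y) phi n =
  \sum_(k < n.+1) ('C(n, k))%:R * sop_coef k * mahler phi (n - k).
Proof. by apply: eq_bigr => k _; rewrite mahler_one_minus_x_pow. Qed.

Lemma conv_coef_tends0 : tends0 (conv_coef (one_minus_x_pow abs y) phi).
Proof.
move=> e e0; have [B B0 hB] := contZp_bounded Hphi.
have [T1 hT1] := abs_fact_small (divr_gt0 e0 B0); have [T2 hT2] := mahler_tends0 Hphi e0.
exists (T1 + T2)%N => n hn; rewrite conv_coefE; apply: abs_sum_le (ltW e0) _ => k _.
rewrite absM (absM ('C(n, k))%:R) -mulrA.
apply: le_trans (ler_piMl _ (abs_natr_le1 _)) _; first by rewrite mulr_ge0 ?abs_ge0.
have [hk|hk] := leqP T1 k.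
  have hsop := le_trans (abs_sop_coef_le k) (hT1 k hk).
  apply: le_trans (ler_pM (abs_ge0 _) (abs_ge0 _) hsop (abs_mahler_le (n - k) hB)) _.
  by rewrite divfK ?gt_eqF.
rewrite -[e]mul1r; apply: ler_pM; rewrite ?abs_ge0 //.
  exact: le_trans (abs_sop_coef_le k) (abs_natr_le1 _).
by apply: hT2; lia.
Qed.

Lemma Sop_convK_nat N :
  Sop abs y phi N%:R = convK abs (one_minus_x_pow abs y) phi N%:R.
Proof.
rewrite /Sop /convK /mahler_fun !(seriesK_finite (L := N.+1)); first last.
- by move=> k hk; rewrite binomK_nat bin_small // mulr0n mulr0 mul0r.
- by move=> n hn; rewrite binomK_nat bin_small // mulr0n mulr0.
pose F k m := ('C(k + m, k))%:R * sop_coef k * mahler phi m * ('C(N, k + m))%:R.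
transitivity (\sum_(n < N.+1) \sum_(k < n.+1) F k (n - k)%N); last first.
  apply: eq_bigr => n _; rewrite conv_coefE mulr_suml binomK_nat.
  by apply: eq_bigr => k _; rewrite /F subnKC // -ltnS.
rewrite sum_triangle; apply: eq_bigr => k _; have hk : (k <= N)%N by rewrite -ltnS.
rewrite binomK_nat -natrB // (mahler_expansion_nat phi (N - k)) mulr_sumr.
apply: eq_bigr => m _; rewrite /F /sop_coef.
transitivity (('C(N, k))%:R * ('C(N - k, m))%:R *
  ((-1) ^+ k * (k`!)%:R * binomK y k) * mahler phi m); first ring.
by rewrite -natrM -bin_mul_bin natrM; ring.
Qed.

Lemma Sop_cont_at x : isZp abs x -> cont_at (Sop abs y phi) x.
Proof.
move=> hx; have [B B0 hB] := contZp_bounded Hphi; rewrite /Sop.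
apply: seriesK_cont_at => // [e e0|k].
  have [T hT] := abs_fact_small (divr_gt0 e0 B0); exists T => z k hz hk.
  rewrite -/(sop_coef k) absM (absM (sop_coef k)) -mulrA.
  have hsop := le_trans (abs_sop_coef_le k) (hT k hk).
  have hterm : abs (binomK z k) * abs (phi (z - k%:R)) <= 1 * B.
    by apply: ler_pM; rewrite ?abs_ge0 ?binomK_le1 //; apply/hB/isZpB/isZp_nat.
  apply: le_trans (ler_pM (abs_ge0 _) (mulr_ge0 (abs_ge0 _) (abs_ge0 _)) hsop hterm) _.
  by rewrite mul1r divfK ?gt_eqF.
apply: (@eq_cont_at (fun z => sop_coef k * (binomK z k * phi (z - k%:R)))) => [z|].
  by rewrite mulrA.
apply/cont_atZ/(cont_atM B0) => //; first by move=> z hz; apply: binomK_le1.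
- by move=> z hz; apply/hB/isZpB/isZp_nat.
- exact: binomK_cont_at.
apply: cont_at_shift; first exact/isZpN/isZp_nat.
exact: contZp_cont_at Hphi (isZpB hx (isZp_nat k)).
Qed.

Lemma convK_cont_at x : isZp abs x -> cont_at (convK abs (one_minus_x_pow abs y) phi) x.
Proof.
move=> hx; rewrite /convK /mahler_fun.
apply: seriesK_cont_at => // [e e0|n]; last exact/cont_atZ/binomK_cont_at.
have [T hT] := conv_coef_tends0 e0; exists T => z n hz hn.
by apply: le_trans (hT n hn); rewrite absM ler_piMr ?abs_ge0 ?binomK_le1.
Qed.

End SopConvolution.

End Cp.

Theorem proposition6p7 (R : realType) (K : closedFieldType) (abs : K -> R) (p : nat)
  (HCp : is_Cp abs p)
  (phi : K -> K) (Hphi : contZp abs phi) (y : K) (Hy : isZp abs y) :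
  forall x : K, isZp abs x ->
    Sop abs y phi x = convK abs (one_minus_x_pow abs y) phi x.
Proof.
move=> x hx; apply: (cont_at_eq_nat HCp hx).
- exact: (@Sop_cont_at _ _ _ _ HCp _ _ Hphi Hy _ hx).
- exact: (@convK_cont_at _ _ _ _ HCp _ _ Hphi Hy _ hx).
- exact: Sop_convK_nat HCp phi y.
Qed.
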